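(* For every integer $d\ge 2$ and every $\theta>0$, in the stag hunt game described in the context, $F$ is strictly decreasing in $\sigma_c^2$, strictly decreasing in $\sigma_b^2$, and strictly increasing in $\sigma_{bc}$ (each time with the remaining parameters $\mu_b,\mu_c$ and the other second moments held fixed).
   Context: For integers $0\le k\le n$ and $\theta>0$ let $\psi_n^k=\frac{\prod_{i=1}^{k}(\theta+i-1)\prod_{j=1}^{n-k}(\theta+j-1)}{\prod_{l=1}^{n}(2\theta+l-1)}$ (empty products equal $1$). For real arrays $\mu_{C,k},\mu_{D,k},\sigma_{CC,kl},\sigma_{CD,kl},\sigma_{DD,kl}$ ($k,l=0,\ldots,d-1$) define $$F=\sum_{k=0}^{d-1}\binom{d-1}{k}\psi_{d+1}^{k+1}(\mu_{C,k}-\mu_{D,k})+\sum_{k,l=0}^{d-1}\binom{d-1}{k}\binom{d-1}{l}\Big[-\psi_{2d+1}^{k+l+2}(\sigma_{CC,kl}-\sigma_{CD,kl})+\psi_{2d+1}^{k+l+1}(\sigma_{DD,kl}-\sigma_{CD,kl})\Big].$$ These arrays are the scaled means and second moments of the payoffs $a_k$ (to a cooperator) and $b_k$ (to a defector) with $k$ cooperating partners in a group of size $d$. In the paper's large-population weak-selection approximation, the average abundance of $C$ is $\tfrac12+\tfrac{\delta(1-u)}{u}F$; weak selection favors the abundance of $C$ iff $F>0$, and increasing $F$ means increasing the average abundance of $C$. Stag hunt game: random benefit $b$ and cost $c$ have scaled moments $\mu_b,\mu_c,\sigma_b^2,\sigma_c^2,\sigma_{bc}$ (i.e. $E[b]=\mu_b\delta+o(\delta)$,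 $E[c]=\mu_c\delta+o(\delta)$, $E[b^2]=\sigma_b^2\delta+o(\delta)$, $E[c^2]=\sigma_c^2\delta+o(\delta)$, $E[bc]=\sigma_{bc}\delta+o(\delta)$). The payoffs are $a_k=-c$ for $k<d-1$, $a_{d-1}=b-c$, and $b_k=0$ for all $k$. Hence $\mu_{C,k}=-\mu_c$ for $k<d-1$, $\mu_{C,d-1}=\mu_b-\mu_c$, $\mu_{D,k}=0$, and $\sigma_{CD,kl}=\sigma_{DD,kl}=0$. Furthermore $\sigma_{CC,kl}=\sigma_c^2$ if $k,l<d-1$; $\sigma_{CC,kl}=\sigma_c^2-\sigma_{bc}$ if exactly one of $k,l$ equals $d-1$; and $\sigma_{CC,kl}=\sigma_c^2-2\sigma_{bc}+\sigma_b^2$ if $k=l=d-1$. *)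

From mathcomp Require Import all_boot all_order all_algebra.
Set Implicit Arguments. Unset Strict Implicit. Unset Printing Implicit Defensive.
Import Order.TTheory GRing.Theory Num.Theory.
Local Open Scope ring_scope.

(* psi_n^k = prod_{i=1}^k (theta+i-1) * prod_{j=1}^{n-k} (theta+j-1)
             / prod_{l=1}^n (2 theta + l - 1);  used only for 0 <= k <= n *)
Definition psi {R : realFieldType} (theta : R) (n k : nat) : R :=
  (\prod_(i < k) (theta + i%:R)) * (\prod_(j < n - k) (theta + j%:R))
  / \prod_(l < n) (2 * theta + l%:R).

Definition Fgen {R : realFieldType} (d : nat) (theta : R)
  (muC muD : nat -> R) (sCC sCD sDD : nat -> nat -> R) : R :=
  \sum_(k < d) ('C(d.-1, k))%:R * psi theta d.+1 k.+1 * (muC k - muD k)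
  + \sum_(k < d) \sum_(l < d) ('C(d.-1, k))%:R * ('C(d.-1, l))%:R *
      (- psi theta (2 * d).+1 (k + l + 2) * (sCC k l - sCD k l)
       + psi theta (2 * d).+1 (k + l + 1) * (sDD k l - sCD k l)).

(* Stag hunt: a_k = -c for k < d-1, a_{d-1} = b - c, b_k = 0. *)
Definition stag_muC {R : realFieldType} (d : nat) (mub muc : R) (k : nat) : R :=
  if (k < d.-1)%N then - muc else mub - muc.

Definition stag_sCC {R : realFieldType} (d : nat) (sb2 sc2 sbc : R)
  (k l : nat) : R :=
  if (k < d.-1)%N && (l < d.-1)%N then sc2
  else if (k == d.-1) && (l == d.-1) then sc2 - 2 * sbc + sb2
  else sc2 - sbc.

Definition F_stag {R : realFieldType} (d : nat) (theta mub muc sb2 sc2 sbc : R)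
  : R :=
  Fgen d theta (stag_muC d mub muc) (fun _ => 0)
    (stag_sCC d sb2 sc2 sbc) (fun _ _ => 0) (fun _ _ => 0).

From mathcomp Require Import all_boot all_order all_algebra.
From mathcomp Require Import ring lra.
Import Order.TTheory GRing.Theory Num.Theory.
Local Open Scope ring_scope.

(* Only the [sCC] entries of [F_stag] depend on the second moments, and [F]
   enters them with the weights [- C(d-1,k) C(d-1,l) psi_{2d+1}^{k+l+2} < 0];
   so [F] strictly decreases whenever [sCC] weakly increases entrywise and
   strictly at one entry.  Since [a_k = -c + [k = d-1] b], the moment
   [E[a_k a_l]] is [sc2 - ([k = d-1] + [l = d-1]) sbc + [k = l = d-1] sb2]:
   raising [sc2] raises every entry, raising [sb2] raises the corner entry
   [k = l = d-1], and lowering [sbc] raises the last row and column. *)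

Lemma psi_gt0 (R : realFieldType) (theta : R) (n k : nat) :
  0 < theta -> 0 < psi theta n k.
Proof.
move=> theta_gt0; rewrite /psi divr_gt0 ?mulr_gt0 //; apply: prodr_gt0 => i _;
  by rewrite ltr_wpDr ?ler0n ?mulr_gt0.
Qed.

Lemma leq_ord_pred (n : nat) (i : 'I_n) : (i <= n.-1)%N.
Proof. by case: n i => [[]|n] // i; exact: leq_ord. Qed.

Lemma psumr_gt0_at {R : numDomainType} {I : finType} (i0 : I) {F : I -> R} :
  (forall i, 0 <= F i) -> 0 < F i0 -> 0 < \sum_i F i.
Proof.
move=> F_ge0 Fi0_gt0; rewrite (bigD1 i0) //=.
by rewrite ltr_wpDr // sumr_ge0.
Qed.

Lemma Fgen_sCC_lt {R : realFieldType} {d : nat} {theta : R} {muC muD : nat -> R}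
    {sCD sDD sCC1 sCC2 : nat -> nat -> R} (k0 l0 : 'I_d) :
  0 < theta ->
  (forall k l : 'I_d, sCC1 k l <= sCC2 k l) -> sCC1 k0 l0 < sCC2 k0 l0 ->
  Fgen d theta muC muD sCC2 sCD sDD < Fgen d theta muC muD sCC1 sCD sDD.
Proof.
move=> theta_gt0 le_sCC lt_sCC; rewrite -subr_gt0.
pose w (k l : 'I_d) : R :=
  'C(d.-1, k)%:R * 'C(d.-1, l)%:R * psi theta (2 * d).+1 (k + l + 2).
have w_gt0 k l : 0 < w k l.
  have binC_gt0 (i : 'I_d) : 0 < 'C(d.-1, i)%:R :> R.
    by rewrite ltr0n bin_gt0 leq_ord_pred.
  by rewrite /w /= mulr_gt0 ?psi_gt0 // mulr_gt0.
pose gap (p : 'I_d * 'I_d) := w p.1 p.2 * (sCC2 p.1 p.2 - sCC1 p.1 p.2).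
have -> : Fgen d theta muC muD sCC1 sCD sDD - Fgen d theta muC muD sCC2 sCD sDD
    = \sum_p gap p.
  rewrite /Fgen opprD addrACA subrr add0r -sumrB.
  rewrite -(pair_bigA _ (fun k l => gap (k, l))) /=.
  by apply: eq_bigr => k _; rewrite -sumrB; apply: eq_bigr => l _; rewrite /gap /w /=; ring.
apply: (psumr_gt0_at (k0, l0)) => [[k l]|]; rewrite /gap /=.
  by rewrite mulr_ge0 ?subr_ge0 // ltW.
by rewrite mulr_gt0 // subr_gt0.
Qed.

Lemma stag_sCCE (R : realFieldType) (d : nat) (sb2 sc2 sbc : R) (k l : 'I_d) :
  stag_sCC d sb2 sc2 sbc k l =
  sc2 - ((k == d.-1 :> nat)%:R + (l == d.-1 :> nat)%:R) * sbc
      + ((k == d.-1 :> nat) && (l == d.-1 :> nat))%:R * sb2.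
Proof.
have last_or_lt (i : 'I_d) : (i < d.-1)%N = (i != d.-1 :> nat).
  by rewrite ltn_neqAle leq_ord_pred andbT.
rewrite /stag_sCC !last_or_lt.
by case: eqP => _; case: eqP => _ /=; ring.
Qed.

Theorem mainTheorem4 (R : realFieldType) (d : nat) (theta : R) :
  (2 <= d)%N -> 0 < theta ->
  (forall mub muc sb2 sbc x y : R, x < y ->
     F_stag d theta mub muc sb2 y sbc < F_stag d theta mub muc sb2 x sbc) /\
  (forall mub muc sc2 sbc x y : R, x < y ->
     F_stag d theta mub muc y sc2 sbc < F_stag d theta mub muc x sc2 sbc) /\
  (forall mub muc sb2 sc2 x y : R, x < y ->
     F_stag d theta mub muc sb2 sc2 x < F_stag d theta mub muc sb2 sc2 y).
Proof.
case: d => [|d] // _ theta_gt0.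
split; [|split] => mub muc s s' x y lt_xy;
  apply: (Fgen_sCC_lt ord_max ord_max) => // [k l|];
  rewrite !stag_sCCE ?eqxx /=; try lra.
- by rewrite lerD2l ler_wpM2l ?ler0n // ltW.
- by rewrite lerD2r lerD2l lerN2 ler_wpM2l ?addr_ge0 ?ler0n // ltW.
Qed.
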